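(* Let $K$ be a field, $S=K[x_1,\dots,x_n]$, $A\subseteq\{1,\dots,n\}$ and $f=\prod_{j\in A}x_j$. Let $J\subset I\subset S$ be monomial ideals and let $$\mathcal D:\ I/J=\bigoplus_{i=1}^r u_iK[Z_i]$$ be a Stanley decomposition of $I/J$ (so $u_i$ are monomials and $Z_i\subseteq\{x_1,\dots,x_n\}$). Put $C=\{i:\ x_j\in Z_i \text{ for all } j\in A\}$, and for $L\subseteq A$ put $f_L=\prod_{l\in L}x_l$ and $$Z_i^L=\{x_l^{-1}:\ l\in L,\ x_l\in Z_i\}\cup\{x_l:\ l\notin L,\ x_l\in Z_i\}.$$ Then $$\mathcal D_f:\ (I/J)_f=\bigoplus_{i\in C}\Big(\bigoplus_{L\subseteq A}u_if_L^{-1}K[Z_i^L]\Big)$$ is a Stanley decomposition of $(I/J)_f=I_f/J_f$. In particular, $\operatorname{sdepth} I/J\le \operatorname{sdepth}(I/J)_f$.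
   Context: $S_f$ denotes the localization $K[x_1,\dots,x_n,x_j^{-1}: j\in A]$. Its monomials are $x_1^{a_1}\cdots x_n^{a_n}$ with $a_j\in\mathbb Z$ for $j\in A$ and $a_j\in\mathbb N$ for $j\notin A$; they form a $K$-basis of $S_f$. A monomial ideal of $S_f$ is an ideal generated by monomials. For monomial ideals $J\subset I\subset S_f$, the residue classes of the monomials in $I\setminus J$ form a $K$-basis of $I/J$, and these classes are identified with the monomials in $I\setminus J$. For a monomial $u\in I\setminus J$ and a set $Z\subseteq\{x_1,\dots,x_n\}\cup\{x_j^{-1}: j\in A\}$ with $\{x_j,x_j^{-1}\}\not\subseteq Z$ for all $j\in A$, $uK[Z]$ denotes the $K$-subspace of $I/J$ spanned by the monomials $uw$, $w$ a monomial in the elements of $Z$; it is called a Stanley space of $I/J$ if it is a free $K[Z]$-submodule of $I/J$ (i.e. $uw\in I\setminus J$ for all such $w$). Its dimension is $|Z|$. A Stanley decomposition of $I/J$ is a decomposition of $I/J$ as a finite direct sum (of $K$-vector spaces) of Stanley spaces $\mathcal D: I/J=\bigoplus_{i=1}^r u_iK[Z_i]$; $\operatorname{sdepth}\mathcal D=\min_i |Z_i|$ and $\operatorname{sdepth}(I/J)$ is the maximum of $\operatorname{sdepth}\mathcal D$ over all Stanley decompositions $\mathcal D$ of $I/J$. For $A=\emptyset$ this is the usual notion for $S$. For $J\subset I\subset S$, $(I/J)_f=I_f/J_f$ with $I_f=IS_f$, $J_f=JS_f$ monomial ideals of $S_f$. *)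

(* Monomials of S_f = K[x_1..x_n, x_j^-1 : j in A] are encoded
   by their exponent vectors in Z^n. *)
From mathcomp Require Import all_boot all_order all_algebra.
Set Implicit Arguments. Unset Strict Implicit. Unset Printing Implicit Defensive.
Import Order.TTheory GRing.Theory Num.Theory.
Local Open Scope ring_scope.

Definition mono (n : nat) := {ffun 'I_n -> int}.

Definition mmul n (u w : mono n) : mono n := [ffun k => u k + w k].

(* u is a monomial of S_f, f = prod_{j in A} x_j (exponents >= 0 outside A) *)
Definition is_mono n (A : {set 'I_n}) (u : mono n) : Prop :=
  forall k, k \notin A -> 0 <= u k.

(* A set M of monomials is the monomial set of a monomial ideal of S_f:
   it consists of monomials of S_f and is closed under multiplication by
   monomials of S_f. (For A = set0 these are the monomial ideals of S.) *)
Definition monomial_ideal n (A : {set 'I_n}) (M : mono n -> Prop) : Prop :=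
  (forall u, M u -> is_mono A u) /\
  (forall u w, M u -> is_mono A w -> M (mmul u w)).

(* monomials of the extension I_f = I S_f of a monomial ideal I of S *)
Definition loc n (A : {set 'I_n}) (M : mono n -> Prop) : mono n -> Prop :=
  fun v => exists u w, M u /\ is_mono A w /\ v = mmul u w.

(* A set Z of variables/inverse variables is encoded as (Zp, Zm):
   Zp = {k | x_k in Z}, Zm = {k | x_k^-1 in Z}.  Admissible: Zm in A and
   never both x_k and x_k^-1. *)
Definition adm_vars n (A : {set 'I_n}) (Zp Zm : {set 'I_n}) : Prop :=
  Zm \subset A /\ Zp :&: Zm = set0.

Definition in_vars n (Zp Zm : {set 'I_n}) (w : mono n) : Prop :=
  forall k, if k \in Zp then 0 <= w k
            else if k \in Zm then w k <= 0 else w k == 0.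

Definition zdim n (Zp Zm : {set 'I_n}) : nat := #|Zp| + #|Zm|.

(* The family (u t K[Z_t])_{t in T, P t} is a Stanley decomposition of I/J
   (MI, MJ the monomial sets of I, J):
   - each Z_t admissible;
   - each u_t K[Z_t] is a Stanley space of I/J (u_t w in I \ J for all w);
   - the sum covers I/J (every monomial of I \ J lies in some u_t K[Z_t]);
   - the sum is direct (the monomial sets of the spaces are pairwise
     disjoint; as all spaces are spanned by subsets of the monomial basis
     of I/J, this is exactly directness of the K-vector space sum). *)
Definition stanley_dec n (A : {set 'I_n}) (MI MJ : mono n -> Prop)
    (T : finType) (P : pred T) (u : T -> mono n) (Zp Zm : T -> {set 'I_n}) : Prop :=
  [/\ forall t, P t -> adm_vars A (Zp t) (Zm t),
      forall t w, P t -> in_vars (Zp t) (Zm t) w ->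
        MI (mmul (u t) w) /\ ~ MJ (mmul (u t) w),
      forall v, MI v -> ~ MJ v ->
        exists2 t, P t & exists2 w, in_vars (Zp t) (Zm t) w & v = mmul (u t) w
    & forall t1 t2 w1 w2, P t1 -> P t2 ->
        in_vars (Zp t1) (Zm t1) w1 -> in_vars (Zp t2) (Zm t2) w2 ->
        mmul (u t1) w1 = mmul (u t2) w2 -> t1 = t2].

(* sdepth(I/J) >= d : some Stanley decomposition D of I/J has sdepth D >= d
   (sdepth D = min of the |Z_i|; empty decomposition has sdepth +oo). *)
Definition sdepth_ge n (A : {set 'I_n}) (MI MJ : mono n -> Prop) (d : nat) : Prop :=
  exists r (u : 'I_r -> mono n) (Zp Zm : 'I_r -> {set 'I_n}),
    stanley_dec A MI MJ predT u Zp Zm /\ (forall i, (d <= zdim (Zp i) (Zm i))%N).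

Definition divL n (u : mono n) (L : {set 'I_n}) : mono n :=
  [ffun k => u k - ((k \in L) : nat)%:Z].

(* A monomial v of S_f lies in I_f iff v f^N lies in I for all large N.  For N
   large, multiplication by f^N therefore maps u_i f_L^-1 K[Z_i^L] (i in C) into
   u_i K[Z_i]; this makes the new spaces Stanley spaces of I_f/J_f and pairwise
   disjoint, L being recovered from the signs of the exponents.  Conversely, for
   v in I_f \ J_f, v f^N lies in some u_i K[Z_i]; once N exceeds all exponents
   of v and of the u_i, every x_j with j in A must lie in Z_i, and L is the set
   of j in A where the exponent of v is smaller than that of u_i.  Since
   |Z_i^L| = |Z_i|, the sdepth does not drop. *)

From mathcomp Require Import all_boot all_order all_algebra.
From mathcomp Require Import zify.
From Stdlib Require Import FunctionalExtensionality.
Set Implicit Arguments. Unset Strict Implicit. Unset Printing Implicit Defensive.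
Import GRing.Theory.
Local Open Scope ring_scope.

Definition eventually (P : nat -> Prop) : Prop :=
  exists N0, forall N, (N0 <= N)%N -> P N.

Lemma eventually_gt (c : nat) : eventually (fun N => (c < N)%N).
Proof. by exists c.+1. Qed.

Lemma eventually_mono (P Q : nat -> Prop) :
  (forall N, P N -> Q N) -> eventually P -> eventually Q.
Proof. by move=> PQ [N0 hP]; exists N0 => N /hP /PQ. Qed.

Lemma eventually_and (P Q : nat -> Prop) :
  eventually P -> eventually Q -> eventually (fun N => P N /\ Q N).
Proof.
move=> [N1 hP] [N2 hQ]; exists (maxn N1 N2) => N.
by rewrite geq_max => /andP[/hP ? /hQ ?].
Qed.

Lemma eventually_all (T : finType) (P : T -> nat -> Prop) :
  (forall t, eventually (P t)) -> eventually (fun N => forall t, P t N).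
Proof.
move=> hP; suff: eventually (fun N => forall t, t \in enum T -> P t N).
  by apply: eventually_mono => N hN t; apply: hN; rewrite mem_enum.
elim: (enum T) => [|t s IHs]; first by exists 0%N.
apply: eventually_mono (eventually_and (hP t) IHs) => N [hPt hs] t'.
by rewrite inE => /predU1P[->|/hs].
Qed.

Lemma eventually_ex (P : nat -> Prop) : eventually P -> exists N, P N.
Proof. by move=> [N0 hP]; exists N0; exact: hP. Qed.

Section Shift.
Variables (n : nat) (A : {set 'I_n}).

Definition cvec (c : int) : mono n := [ffun k => if k \in A then c else 0].

(* [shift N v] is the exponent vector of v f^N. *)
Definition shift (N : nat) (v : mono n) : mono n := mmul v (cvec N%:Z).

Lemma shift_inj N : injective (shift N).
Proof.
move=> v w /ffunP E; apply/ffunP => k.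
by move: (E k); rewrite !ffunE => /addIr.
Qed.

Lemma shift_mmul N (u w : mono n) : shift N (mmul u w) = mmul u (shift N w).
Proof. by apply/ffunP => k; rewrite !ffunE addrA. Qed.

Lemma mmul_divL (u w : mono n) L : mmul (divL u L) w = mmul u (divL w L).
Proof. by apply/ffunP => k; rewrite !ffunE addrAC addrA. Qed.

Lemma shift_loc (M : mono n -> Prop) N v : M (shift N v) -> loc A M v.
Proof.
move=> hM; exists (shift N v), (cvec (- N%:Z)); split=> //; split.
  by move=> k /negbTE kA; rewrite ffunE kA.
by apply/ffunP => k; rewrite !ffunE; case: (k \in A); rewrite ?subr0 ?addr0 ?addrK.
Qed.

Lemma loc_shift (M : mono n -> Prop) v :
  monomial_ideal set0 M -> loc A M v -> eventually (fun N => M (shift N v)).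
Proof.
move=> [_ hM] [u [w [hu [hw ->]]]].
apply: eventually_mono (eventually_all (fun k => eventually_gt `|w k|)) => N hN.
rewrite shift_mmul; apply: hM => // k _; rewrite !ffunE.
have := hN k; case kA: (k \in A); last by move=> _; rewrite addr0; apply: hw; rewrite kA.
by move=> ?; lia.
Qed.

Lemma lift_in_vars (Z L : {set 'I_n}) (w : mono n) :
  A \subset Z -> L \subset A -> in_vars (Z :\: L) (L :&: Z) w ->
  eventually (fun N => in_vars Z set0 (shift N (divL w L))).
Proof.
move=> /subsetP AZ /subsetP LA hw.
apply: eventually_mono (eventually_all (fun k => eventually_gt `|w k|)) => N hN k.
have := hN k; have := hw k; have := AZ k; have := LA k; rewrite !ffunE !inE.
by case: (k \in L); case: (k \in A); case: (k \in Z) => //= *; lia.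
Qed.

Lemma unlift_in_vars (Z : {set 'I_n}) N (w : mono n) :
  A \subset Z -> in_vars Z set0 w ->
  exists2 L : {set 'I_n}, L \subset A &
    exists2 w' : mono n, in_vars (Z :\: L) (L :&: Z) w' & w = shift N (divL w' L).
Proof.
move=> /subsetP AZ hw; set L := [set k in A | w k < N%:Z].
exists L; first by apply/subsetP => k; rewrite inE => /andP[].
exists [ffun k => w k - cvec N%:Z k + ((k \in L) : nat)%:Z].
  move=> k; have := hw k; have := AZ k; rewrite !ffunE !inE.
  case: (k \in A); case: (k \in Z); case: (boolP (w k < N%:Z)) => //= *; lia.
apply/ffunP => k; rewrite !ffunE; case: (k \in L); case: (k \in A) => /=; lia.
Qed.

Lemma shift_vars_subset (Z : {set 'I_n}) N (u v w : mono n) :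
  (forall k, (`|u k| + `|v k| < N)%N) -> in_vars Z set0 w ->
  shift N v = mmul u w -> A \subset Z.
Proof.
move=> hN hw /ffunP E; apply/subsetP => k kA; apply: contraT => kZ.
have := hw k; have := E k; have := hN k; rewrite !ffunE kA (negbTE kZ) inE /=.
by move=> ? ? /eqP ?; lia.
Qed.

End Shift.

Lemma divL_vars_inj n (Z L1 L2 : {set 'I_n}) (u w1 w2 : mono n) :
  L1 \subset Z -> L2 \subset Z ->
  in_vars (Z :\: L1) (L1 :&: Z) w1 -> in_vars (Z :\: L2) (L2 :&: Z) w2 ->
  mmul (divL u L1) w1 = mmul (divL u L2) w2 -> L1 = L2.
Proof.
move=> /subsetP L1Z /subsetP L2Z hw1 hw2 /ffunP E; apply/setP => k.
have := E k; have := hw1 k; have := hw2 k; have := L1Z k; have := L2Z k.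
rewrite !ffunE !inE.
by case: (k \in L1); case: (k \in L2); case: (k \in Z) => //= *; lia.
Qed.

Lemma zdim_divL_vars n (Z L : {set 'I_n}) : zdim (Z :\: L) (L :&: Z) = #|Z|.
Proof. by rewrite /zdim addnC setIC cardsID. Qed.

Lemma adm_divL_vars n (A Z L : {set 'I_n}) :
  L \subset A -> adm_vars A (Z :\: L) (L :&: Z).
Proof.
move=> LA; rewrite /adm_vars; split; first exact: subset_trans (subsetIl _ _) LA.
by apply/setP => k; rewrite !inE; case: (k \in L); rewrite /= ?andbF.
Qed.

Section Localization.
Variables (n : nat) (A : {set 'I_n}) (MI MJ : mono n -> Prop).
Variables (r : nat) (u : 'I_r -> mono n) (Z : 'I_r -> {set 'I_n}).
Hypotheses (hI : monomial_ideal set0 MI) (hJ : monomial_ideal set0 MJ).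
Hypothesis hD : stanley_dec set0 MI MJ predT u Z (fun _ => set0).

Let P (p : 'I_r * {set 'I_n}) := (A \subset Z p.1) && (p.2 \subset A).

Lemma loc_stanley_space (i : 'I_r) (L : {set 'I_n}) (w : mono n) :
  A \subset Z i -> L \subset A -> in_vars (Z i :\: L) (L :&: Z i) w ->
  loc A MI (mmul (divL (u i) L) w) /\ ~ loc A MJ (mmul (divL (u i) L) w).
Proof.
case: hD => _ hspace _ _ AZ LA hw.
have hlift := lift_in_vars AZ LA hw.
have Eshift N : shift A N (mmul (divL (u i) L) w) = mmul (u i) (shift A N (divL w L)).
  by rewrite mmul_divL shift_mmul.
split.
  have [N hN] := eventually_ex hlift.
  by apply: (@shift_loc _ _ _ N); rewrite Eshift; exact: (hspace _ _ isT hN).1.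
move=> /(loc_shift hJ) hJN.
have [N [hN hJN']] := eventually_ex (eventually_and hlift hJN).
by apply: (hspace _ _ isT hN).2; rewrite -Eshift.
Qed.

Lemma loc_stanley_cover (v : mono n) :
  loc A MI v -> ~ loc A MJ v ->
  exists2 p, P p & exists2 w, in_vars (Z p.1 :\: p.2) (p.2 :&: Z p.1) w &
    v = mmul (divL (u p.1) p.2) w.
Proof.
case: hD => _ _ hcover _ /(loc_shift hI) hIN nJ.
have hbound : eventually (fun N => forall i k, (`|u i k| + `|v k| < N)%N).
  by apply: eventually_all => i; apply: eventually_all => k; exact: eventually_gt.
have [N [hIN' hN]] := eventually_ex (eventually_and hIN hbound).
have nJN : ~ MJ (shift A N v) by move/shift_loc.
have [i _ [w hw Ev]] := hcover _ hIN' nJN.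
have AZ := shift_vars_subset (hN i) hw Ev.
have [L LA [w' hw' Ew]] := unlift_in_vars N AZ hw.
exists (i, L); first by rewrite /P /= AZ LA.
by exists w' => //; apply: (@shift_inj _ A N); rewrite Ev Ew -shift_mmul -mmul_divL.
Qed.

Lemma loc_stanley_disjoint (p1 p2 : 'I_r * {set 'I_n}) (w1 w2 : mono n) :
  P p1 -> P p2 ->
  in_vars (Z p1.1 :\: p1.2) (p1.2 :&: Z p1.1) w1 ->
  in_vars (Z p2.1 :\: p2.2) (p2.2 :&: Z p2.1) w2 ->
  mmul (divL (u p1.1) p1.2) w1 = mmul (divL (u p2.1) p2.2) w2 -> p1 = p2.
Proof.
case: hD => _ _ _ hdisj.
case: p1 p2 => [i1 L1] [i2 L2] /andP[/= AZ1 LA1] /andP[/= AZ2 LA2] hw1 hw2 E.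
have [N [hN1 hN2]] :=
  eventually_ex (eventually_and (lift_in_vars AZ1 LA1 hw1) (lift_in_vars AZ2 LA2 hw2)).
have ei : i1 = i2.
  by apply: (hdisj _ _ _ _ isT isT hN1 hN2); rewrite -!shift_mmul -!mmul_divL E.
subst i2; congr pair; apply: divL_vars_inj hw1 hw2 E.
  exact: subset_trans LA1 AZ1.
exact: subset_trans LA2 AZ2.
Qed.

Lemma stanley_dec_loc :
  stanley_dec A (loc A MI) (loc A MJ) P
    (fun p => divL (u p.1) p.2) (fun p => Z p.1 :\: p.2) (fun p => p.2 :&: Z p.1).
Proof.
split.
- by move=> [i L] /andP[_ LA]; exact: adm_divL_vars.
- by move=> [i L] w /andP[AZ LA]; exact: loc_stanley_space.
- exact: loc_stanley_cover.
- exact: loc_stanley_disjoint.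
Qed.

End Localization.

Lemma stanley_dec_enum n (A : {set 'I_n}) (MI MJ : mono n -> Prop)
    (T : finType) (P : pred T) (u : T -> mono n) (Zp Zm : T -> {set 'I_n}) :
  stanley_dec A MI MJ P u Zp Zm ->
  stanley_dec A MI MJ predT (fun i : 'I_#|P| => u (enum_val i))
    (fun i => Zp (enum_val i)) (fun i => Zm (enum_val i)).
Proof.
case=> hadm hspace hcover hdisj; split.
- by move=> i _; apply: hadm; exact: enum_valP.
- by move=> i w _; apply: hspace; exact: enum_valP.
- move=> v hv nv; have [t Pt [w hw ->]] := hcover v hv nv.
  have Pt' : t \in P by [].
  by exists (enum_rank_in Pt' t) => //; exists w; rewrite enum_rankK_in.
- move=> i1 i2 w1 w2 _ _ hw1 hw2 E; apply: enum_val_inj.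
  exact: hdisj (enum_valP i1) (enum_valP i2) hw1 hw2 E.
Qed.

Lemma sdepth_ge_loc n (A : {set 'I_n}) (MI MJ : mono n -> Prop) d :
  monomial_ideal set0 MI -> monomial_ideal set0 MJ ->
  sdepth_ge set0 MI MJ d -> sdepth_ge A (loc A MI) (loc A MJ) d.
Proof.
move=> hI hJ [r [u [Zp [Zm [hD hd]]]]].
have EZm : Zm = fun _ => set0.
  apply: functional_extensionality => i.
  by case: hD => /(_ i isT) [/=]; rewrite subset0 => /eqP.
subst Zm; have := stanley_dec_enum (stanley_dec_loc A hI hJ hD).
set P := (fun p : 'I_r * {set 'I_n} => _) => hDf.
exists #|P|; do 3 eexists; split; first exact: hDf.
move=> i /=; case: (enum_val i) => j L /=.
by rewrite zdim_divL_vars; have := hd j; rewrite /zdim cards0 addn0.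
Qed.

Theorem theorem3p1 (n : nat) (A : {set 'I_n}) (MI MJ : mono n -> Prop)
  (r : nat) (u : 'I_r -> mono n) (Z : 'I_r -> {set 'I_n}) :
  monomial_ideal set0 MI -> monomial_ideal set0 MJ ->
  (forall v, MJ v -> MI v) ->
  stanley_dec set0 MI MJ predT u Z (fun _ => set0) ->
  let C := fun i : 'I_r => A \subset Z i in
  stanley_dec A (loc A MI) (loc A MJ)
    (fun p : 'I_r * {set 'I_n} => C p.1 && (p.2 \subset A))
    (fun p => divL (u p.1) p.2)
    (fun p => Z p.1 :\: p.2)
    (fun p => p.2 :&: Z p.1)
  /\ (forall d : nat, sdepth_ge set0 MI MJ d -> sdepth_ge A (loc A MI) (loc A MJ) d).
Proof.
move=> hI hJ _ hD C; split; first exact: stanley_dec_loc.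
by move=> d; exact: sdepth_ge_loc.
Qed.
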